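(* For $n\ge i+1\ge2$, \[ D_{n,i}=z^{i-1}\tau_iD_{n-i}-z^{i+2}\tau_{i-1}D_{n-i-1}, \] where the polynomials $\tau_i=\tau_i(z)$ are defined by $\sum_{i\ge0}\tau_iw^i=\dfrac{w}{1-2w+w^2-z^3w^3}$.
   Context: For $h\ge1$, $D_h=D_h(z)$ is the determinant of the $h\times h$ matrix $T_h$ (rows/columns indexed $0,\dots,h-1$) with entries $(T_h)_{p,p}=1$, $(T_h)_{p,p+1}=-2z$, $(T_h)_{p,p+2}=z^2$, $(T_h)_{p+1,p}=-z^2$, and all other entries $0$; $D_0=1$. Let $M_n=T_n^{\mathsf T}$ (the transpose, so $\det M_n=D_n$). For $1\le i\le n$, $D_{n,i}$ denotes the determinant of the matrix obtained from $M_n$ by replacing its $i$-th column (columns numbered $1,\dots,n$) by the vector $(1,0,\dots,0)^{\mathsf T}$. *)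

From HB Require Import structures.
From mathcomp Require Import all_boot all_order all_algebra.
Set Implicit Arguments. Unset Strict Implicit. Unset Printing Implicit Defensive.
Import Order.TTheory GRing.Theory Num.Theory.
Local Open Scope ring_scope.

Definition Tmx (R : comRingType) (z : R) (h : nat) : 'M[R]_h :=
  \matrix_(p < h, q < h)
    (if q == p :> nat then 1
     else if q == p.+1 :> nat then - (2%:R * z)
     else if q == p.+2 :> nat then z ^+ 2
     else if p == q.+1 :> nat then - z ^+ 2
     else 0).

Definition Dpoly (R : comRingType) (z : R) (h : nat) : R := \det (Tmx z h).

Definition Mmx (R : comRingType) (z : R) (n : nat) : 'M[R]_n := (Tmx z n)^T.

(* D_{n,i}: determinant of M_n with its i-th column (columns numbered 1..n)
   replaced by (1,0,...,0)^T. *)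
Definition Dni (R : comRingType) (z : R) (n i : nat) : R :=
  \det (\matrix_(p < n, q < n)
          (if q == i.-1 :> nat then (p == 0 :> nat)%:R else Mmx z n p q)).

Definition denom_coef (R : comRingType) (z : R) (j : nat) : R :=
  match j with
  | 0 => 1
  | 1 => - 2%:R
  | 2 => 1
  | 3 => - z ^+ 3
  | _ => 0
  end.

(* tau is the coefficient sequence of w / (1 - 2w + w^2 - z^3 w^3), i.e.
   (1 - 2w + w^2 - z^3 w^3) * \sum_i tau_i w^i = w as formal power series,
   compared coefficientwise. *)
Definition is_tau_seq (R : comRingType) (z : R) (tau : nat -> R) : Prop :=
  forall k : nat,
    \sum_(j < k.+1) denom_coef z j * tau (k - j)%N = (k == 1%N)%:R.

From HB Require Import structures.
From mathcomp Require Import all_boot all_order all_algebra.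
From mathcomp Require Import ring zify.
Import GRing.Theory.
Local Open Scope ring_scope.

(* Expanding
   along the last row or column of a matrix that is sparse there gives short
   recurrences; in particular a matrix with one subdiagonal and two
   superdiagonals near its bottom-right corner satisfies a three-term
   recurrence (det_fun_band).
   Expanding D_{n,i} along its replaced column reduces it, up to the sign
   (-1)^(i-1), to the determinant of the matrix G_{i-1} obtained from T_n by
   deleting row i-1 and column 0 (Dni_as_G).  The top i-1 rows of G_{i-1} are
   those of T with column 0 deleted (the matrix U), its bottom rows are those
   of T itself.  Hence D_h, det U_m and det G_j all satisfy order-3 linear
   recurrences, and a uniqueness principle for such recurrences (lrec3_eq)
   identifies det U_m = (-z)^m tau_{m+1} (using the recurrence of tau given
   by its generating function) and then det G_j as an explicit combination of
   two consecutive D_h (G_closed).  The theorem is the resulting bookkeeping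
   of signs and indices. *)

Section LinearRecurrence.
Context {R : comRingType}.

Definition lrec3 (a b c : R) (s : nat -> R) : Prop :=
  forall p, s p.+3 = a * s p.+2 + b * s p.+1 + c * s p.

Lemma lrec3_eq {a b c : R} {s t : nat -> R} :
  lrec3 a b c s -> lrec3 a b c t ->
  s 0 = t 0 -> s 1 = t 1 -> s 2 = t 2 -> forall n, s n = t n.
Proof.
move=> recs rect e0 e1 e2 n.
suff [] : [/\ s n = t n, s n.+1 = t n.+1 & s n.+2 = t n.+2] by [].
elim: n => [|n [h0 h1 h2]]; first by [].
by split=> //; rewrite recs rect h0 h1 h2.
Qed.

End LinearRecurrence.

Section DetFun.
Context {R : comRingType}.
Implicit Types (a b : nat -> nat -> R) (m p : nat).

Definition det_fun a m : R := \det (\matrix_(r < m, c < m) a r c).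

Lemma det_fun_ext a b m :
  (forall r c, (r < m)%N -> (c < m)%N -> a r c = b r c) ->
  det_fun a m = det_fun b m.
Proof.
by move=> eq_ab; congr (\det _); apply/matrixP => r c; rewrite !mxE eq_ab.
Qed.

Lemma det_fun_tr a m : det_fun a m = det_fun (fun r c => a c r) m.
Proof. by rewrite /det_fun -det_tr; congr (\det _); apply/matrixP => r c; rewrite !mxE. Qed.

Lemma det_fun0 a : det_fun a 0 = 1.
Proof. exact: det_mx00. Qed.

Lemma minor_fun a m (i j : 'I_m.+1) :
  row' i (col' j (\matrix_(r < m.+1, c < m.+1) a r c)) =
  \matrix_(r < m, c < m) a (bump i r) (bump j c).
Proof. by apply/matrixP => r c; rewrite !mxE. Qed.

Lemma bump_lt h k : (k < h)%N -> bump h k = k.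
Proof. by move=> lt_kh; rewrite /bump leqNgt lt_kh. Qed.

Lemma bump_ge h k : (h <= k)%N -> bump h k = k.+1.
Proof. by move=> le_hk; rewrite /bump le_hk. Qed.

Lemma sign_double k : (-1) ^+ (k + k) = 1 :> R.
Proof. by rewrite addnn -muln2 exprM sqrr_sign. Qed.

Lemma det_fun_col a m : det_fun a m.+1 =
  \sum_(r < m.+1) a r m * ((-1) ^+ (r + m) * det_fun (fun r' c => a (bump r r') c) m).
Proof.
rewrite /det_fun (expand_det_col _ ord_max); apply: eq_bigr => r _.
rewrite /cofactor minor_fun mxE; congr (_ * (_ * \det _)).
by apply/matrixP => r' c; rewrite !mxE (@bump_lt m c).
Qed.

Lemma det_fun_row a m : det_fun a m.+1 =
  \sum_(c < m.+1) a m c * ((-1) ^+ (m + c) * det_fun (fun r c' => a r (bump c c')) m).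
Proof.
rewrite /det_fun (expand_det_row _ ord_max); apply: eq_bigr => c _.
rewrite /cofactor minor_fun mxE; congr (_ * (_ * \det _)).
by apply/matrixP => r c'; rewrite !mxE (@bump_lt m r).
Qed.

Lemma det_fun_col1 a m : (forall r, (r < m)%N -> a r m = 0) ->
  det_fun a m.+1 = a m m * det_fun a m.
Proof.
move=> col0; rewrite det_fun_col big_ord_recr /= big1 ?add0r; last first.
  by move=> r _; rewrite col0 ?mul0r.
rewrite sign_double mul1r; congr (_ * _).
by apply: det_fun_ext => r c lt_rm _; rewrite bump_lt.
Qed.

Lemma det_fun_row2 a m : (forall c, (c < m)%N -> a m.+1 c = 0) ->
  det_fun a m.+2 =
  a m.+1 m.+1 * det_fun a m.+1 - a m.+1 m * det_fun (fun r c => a r (bump m c)) m.+1.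
Proof.
move=> row0; rewrite det_fun_row big_ord_recr /= big_ord_recr /= big1 ?add0r; last first.
  by move=> c _; rewrite row0 ?mul0r.
rewrite sign_double mul1r addSn exprS sign_double mulr1 mulN1r mulrN addrC.
congr (_ * _ - _); apply: det_fun_ext => r c _ lt_cm.
by rewrite bump_lt.
Qed.

(* The three-term recurrence for a matrix with one subdiagonal and two
   superdiagonals in its last three rows and columns. *)
Lemma det_fun_band a p :
  (forall c, (c < p.+1)%N -> a p.+2 c = 0) ->
  (forall c, (c < p)%N -> a p.+1 c = 0) ->
  (forall r, (r < p)%N -> a r p.+2 = 0) ->
  det_fun a p.+3 = a p.+2 p.+2 * det_fun a p.+2
     - a p.+2 p.+1 * (a p.+1 p.+2 * det_fun a p.+1 - a p.+1 p * (a p p.+2 * det_fun a p)).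
Proof.
move=> row2 row1 col2; rewrite (det_fun_row2 _ _ row2); congr (_ - _ * _).
rewrite det_fun_row2; last by move=> c lt_cp; rewrite bump_lt ?row1 // ltnW.
rewrite (@bump_ge p.+1 p.+1) // (@bump_lt p.+1 p) //; congr (_ * _ - _ * _).
  by apply: det_fun_ext => r c _ lt_cp; rewrite bump_lt.
rewrite det_fun_col1; last by move=> r lt_rp; rewrite !bump_ge // col2.
rewrite !bump_ge //; congr (_ * _).
by apply: det_fun_ext => r c _ lt_cp; rewrite !bump_lt // ltnW.
Qed.

End DetFun.

Section BandMatrices.
Context {R : comRingType} (z : R).

Definition Tf (p q : nat) : R :=
  if q == p :> nat then 1
  else if q == p.+1 :> nat then - (2%:R * z)
  else if q == p.+2 :> nat then z ^+ 2
  else if p == q.+1 :> nat then - z ^+ 2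
  else 0.

Definition Uf (r c : nat) : R := Tf r c.+1.

Definition Gf (j r c : nat) : R := Tf (bump j r) c.+1.

Lemma Dpoly_det_fun h : Dpoly z h = det_fun Tf h.
Proof. by []. Qed.

Ltac band_entry := rewrite /Tf; repeat case: eqP => ?; try lia; by [].

Lemma Tf_diag p : Tf p p = 1. Proof. band_entry. Qed.
Lemma Tf_super1 p : Tf p p.+1 = - (2%:R * z). Proof. band_entry. Qed.
Lemma Tf_super2 p : Tf p p.+2 = z ^+ 2. Proof. band_entry. Qed.
Lemma Tf_sub1 p : Tf p.+1 p = - z ^+ 2. Proof. band_entry. Qed.
Lemma Tf_below p q : (q.+1 < p)%N -> Tf p q = 0. Proof. move=> ?; band_entry. Qed.
Lemma Tf_above p q : (p.+2 < q)%N -> Tf p q = 0. Proof. move=> ?; band_entry. Qed.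

Lemma D_lrec3 : lrec3 1 (- (2%:R * z ^+ 3)) (z ^+ 6) (Dpoly z).
Proof.
move=> p; rewrite !Dpoly_det_fun det_fun_band.
- by rewrite Tf_diag Tf_sub1 Tf_super1 Tf_sub1 Tf_super2; ring.
- by move=> c lt_cp; rewrite Tf_below.
- by move=> c lt_cp; rewrite Tf_below.
- by move=> r lt_rp; rewrite Tf_above.
Qed.

Lemma D0 : Dpoly z 0 = 1. Proof. by rewrite Dpoly_det_fun det_fun0. Qed.

Lemma D1 : Dpoly z 1 = 1.
Proof. by rewrite Dpoly_det_fun det_fun_col1 // det_fun0 Tf_diag mulr1. Qed.

Lemma D2 : Dpoly z 2 = 1 - 2%:R * z ^+ 3.
Proof.
rewrite Dpoly_det_fun det_fun_row2 // -Dpoly_det_fun D1 det_fun_col1 // det_fun0.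
by rewrite Tf_diag Tf_sub1 Tf_super1; ring.
Qed.

(* The transpose of U has the band shape of T (one subdiagonal, two
   superdiagonals), with different entries; hence its own recurrence. *)
Lemma U_lrec3 : lrec3 (- (2%:R * z)) (- z ^+ 2) (- z ^+ 6) (det_fun Uf).
Proof.
have tr m : det_fun (fun r c => Uf c r) m = det_fun Uf m by rewrite det_fun_tr.
move=> p; rewrite det_fun_tr det_fun_band ?tr.
- by rewrite /Uf Tf_diag !Tf_super1 !Tf_super2 Tf_sub1; ring.
- by move=> c lt_cp; rewrite /Uf Tf_above.
- by move=> c lt_cp; rewrite /Uf Tf_above.
- by move=> r lt_rp; rewrite /Uf Tf_below.
Qed.

Lemma U0 : det_fun Uf 0 = 1. Proof. exact: det_fun0. Qed.

Lemma U1 : det_fun Uf 1 = - (2%:R * z).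
Proof. by rewrite det_fun_col1 // det_fun0 /Uf Tf_super1 mulr1. Qed.

Lemma U2 : det_fun Uf 2 = 3%:R * z ^+ 2.
Proof.
rewrite det_fun_row2 // U1 det_fun_col1 // det_fun0 /Uf /=.
by rewrite Tf_super1 Tf_super2 Tf_diag; ring.
Qed.

Lemma G_top j m : (m <= j)%N -> det_fun (Gf j) m = det_fun Uf m.
Proof.
move=> le_mj; apply: det_fun_ext => r c lt_rm _.
by rewrite /Gf /Uf bump_lt // (leq_trans lt_rm le_mj).
Qed.

(* The first sizes reaching the deleted row, computed by hand. *)
Lemma G_seam1 j : det_fun (Gf j.+1) j.+2 = det_fun Uf j.+1 + z ^+ 4 * det_fun Uf j.
Proof.
rewrite det_fun_row2; last by move=> c lt_cj; rewrite /Gf bump_ge // Tf_below.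
rewrite G_top // (det_fun_col1 (fun r c => Gf j.+1 r (bump j c))); last first.
  by move=> r lt_rj; rewrite /Gf (@bump_lt j.+1 r) ?(@bump_ge j j) ?Tf_above //; lia.
rewrite /Gf (@bump_ge j.+1 j.+1) // (@bump_lt j.+1 j) // (@bump_ge j j) //.
rewrite Tf_diag Tf_sub1 Tf_super2.
have -> : det_fun (fun r c => Tf (bump j.+1 r) (bump j c).+1) j = det_fun Uf j.
  by apply: det_fun_ext => r c lt_rj lt_cj; rewrite !bump_lt // ltnW.
ring.
Qed.

Lemma G_seam2 j : det_fun (Gf j) j.+2 = det_fun (Gf j) j.+1 - 2%:R * z ^+ 3 * det_fun Uf j.
Proof.
rewrite det_fun_row2; last by move=> c lt_cj; rewrite /Gf bump_ge // Tf_below.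
rewrite (det_fun_col1 (fun r c => Gf j r (bump j c))); last first.
  by move=> r lt_rj; rewrite /Gf (@bump_lt j r) ?(@bump_ge j j) ?Tf_above.
rewrite /Gf !bump_ge // Tf_diag Tf_sub1 Tf_super1.
have -> : det_fun (fun r c => Tf (bump j r) (bump j c).+1) j = det_fun Uf j.
  by apply: det_fun_ext => r c lt_rj lt_cj; rewrite !bump_lt.
ring.
Qed.

(* Below the deleted row, G_j has the band structure of T. *)
Lemma G_rec j p : (j <= p)%N -> det_fun (Gf j) p.+3 =
  det_fun (Gf j) p.+2 - 2%:R * z ^+ 3 * det_fun (Gf j) p.+1 + z ^+ 6 * det_fun (Gf j) p.
Proof.
move=> le_jp; rewrite det_fun_band.
- rewrite /Gf !bump_ge; try lia.
  by rewrite Tf_diag Tf_sub1 Tf_super1 Tf_sub1 Tf_super2; ring.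
- by move=> c lt_cp; rewrite /Gf bump_ge ?Tf_below //; lia.
- by move=> c lt_cp; rewrite /Gf bump_ge ?Tf_below //; lia.
- move=> r lt_rp; rewrite /Gf Tf_above //.
  by rewrite /bump; case: (j <= r)%N => /=; lia.
Qed.

End BandMatrices.

Section TauSequence.
Context {R : comRingType} {z : R} {tau : nat -> R}.
Hypothesis htau : is_tau_seq z tau.

Lemma tau0 : tau 0 = 0.
Proof. by have := htau 0; rewrite big_ord1 /= mul1r. Qed.

Lemma tau1 : tau 1 = 1.
Proof. by have := htau 1; rewrite !big_ord_recl big_ord0 /= tau0 mulr0 !addr0 mul1r. Qed.

Lemma tau2 : tau 2 = 2%:R.
Proof.
have := htau 2; rewrite !big_ord_recl big_ord0 /= tau0 tau1 mulr0 !addr0 mul1r mulr1.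
by move/(congr1 (fun x => x + 2%:R)); rewrite subrK add0r.
Qed.

Lemma tau_rec k : tau k.+3 = 2%:R * tau k.+2 - tau k.+1 + z ^+ 3 * tau k.
Proof.
have := htau k.+3; rewrite !big_ord_recl big1 => [/= coef_k3|i _]; last by rewrite mul0r.
move: coef_k3; rewrite /bump /= !addn0 !add1n !subSS !subn0 mulr0n => coef_k3.
by rewrite -[tau k.+3]subr0 -coef_k3; ring.
Qed.

End TauSequence.

Section ClosedForms.
Context {R : comRingType} {z : R} {tau : nat -> R}.
Hypothesis htau : is_tau_seq z tau.

(* det U_m = (-z)^m tau_{m+1}: both sides obey the recurrence of U_lrec3. *)
Lemma U_closed m : det_fun (Uf z) m = (- z) ^+ m * tau m.+1.
Proof.
apply: (lrec3_eq (U_lrec3 z) (t := fun m => (- z) ^+ m * tau m.+1)) => [p|||] /=.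
- by rewrite (tau_rec htau p.+1) !exprS; ring.
- by rewrite U0 (tau1 htau) expr0 mulr1.
- by rewrite U1 (tau2 htau) expr1; ring.
- by rewrite U2 (tau_rec htau) (tau2 htau) (tau1 htau) (tau0 htau); ring.
Qed.

Lemma G_first j : det_fun (Gf z j) j.+1 = (- z) ^+ j * (tau j.+1 - z ^+ 3 * tau j).
Proof.
case: j => [|j].
  by rewrite det_fun_col1 // det_fun0 /Gf Tf_diag (tau1 htau) (tau0 htau); ring.
by rewrite G_seam1 !U_closed !exprS; ring.
Qed.

(* Beyond the seam both sides satisfy the recurrence of D (D_lrec3, G_rec). *)
Lemma G_closed j k : det_fun (Gf z j) (j + k).+1 =
  (- z) ^+ j * (tau j.+1 * Dpoly z k.+1 - z ^+ 3 * tau j * Dpoly z k).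
Proof.
apply: (@lrec3_eq _ 1 (- (2%:R * z ^+ 3)) (z ^+ 6)
  (fun k => det_fun (Gf z j) (j + k).+1)
  (fun k => (- z) ^+ j * (tau j.+1 * Dpoly z k.+1 - z ^+ 3 * tau j * Dpoly z k)))
  => [p|p|||] /=.
- by rewrite !addnS G_rec ?leqW ?leq_addr //; ring.
- by rewrite (D_lrec3 z p.+1) (D_lrec3 z p); ring.
- by rewrite addn0 G_first D1 D0; ring.
- by rewrite addn1 G_seam2 G_first U_closed D2 D1; ring.
- by rewrite addn2 G_rec // G_seam2 G_first G_top // U_closed D_lrec3 D2 D1 D0; ring.
Qed.

End ClosedForms.

(* Expanding D_{N+1,j+1} along its replaced column e_1 leaves, up to sign,
   the transposed minor of T_{N+1} without row j and column 0, i.e. G_j. *)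
Lemma Dni_as_G {R : comRingType} (z : R) (j N : nat) : (j < N.+1)%N ->
  Dni z N.+1 j.+1 = (-1) ^+ j * det_fun (Gf z j) N.
Proof.
move=> lt_jN; pose a p q := if q == j then (p == 0%N)%:R else Tf z q p.
have -> : Dni z N.+1 j.+1 = det_fun a N.+1.
  by congr (\det _); apply/matrixP => p q; rewrite !mxE.
rewrite /det_fun (expand_det_col _ (Ordinal lt_jN)) big_ord_recl big1 ?addr0; last first.
  by move=> r _; rewrite mxE /a /= eqxx mul0r.
rewrite /cofactor minor_fun mxE /a /= eqxx mul1r add0n; congr (_ * _).
rewrite -det_tr; congr (\det _); apply/matrixP => r c; rewrite !mxE /=.
by rewrite eq_sym (negbTE (neq_bump j r)) /Gf (@bump_ge 0 c).
Qed.

(* With i = j+1 and n = j+k+2: D_{n,i} = (-1)^j det G_j, and (-1)^j (-z)^j = z^j. *)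
Theorem mainTheorem5 (R : comRingType) (z : R) (tau : nat -> R)
    (htau : is_tau_seq z tau) (n i : nat) :
  (2 <= i.+1 <= n)%N ->
  Dni z n i =
    z ^+ (i.-1) * tau i * Dpoly z (n - i)
    - z ^+ (i + 2) * tau (i.-1) * Dpoly z (n - i - 1).
Proof.
case/andP; case: i => [//|j] _ le_jn.
have [k ->] : exists k, n = (j + k).+2 by exists (n - j.+2)%N; lia.
rewrite Dni_as_G; last by lia.
rewrite (G_closed htau) /=.
have -> : ((j + k).+2 - j.+1 = k.+1)%N by lia.
rewrite subn1 /= (exprNn z) -mulrA signrMK.
by rewrite addSnnS exprD; ring.
Qed.
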